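(* No natural number occurs three or more times in the sequence $(a(n))_{n\ge 0}$; that is, there do not exist $x<y<z$ in $\mathbb{N}$ with $a(x)=a(y)=a(z)$.
   Context: $\mathbb{N}=\{0,1,2,\ldots\}$. Let $(F_n)_{n\ge 0}$ be the Fibonacci numbers: $F_0=0$, $F_1=1$, $F_n=F_{n-1}+F_{n-2}$ for $n\ge 2$. Define $(a(n))_{n\ge 0}$ (OEIS A105774) by $a(0)=0$, $a(1)=1$, and for $n\ge 2$, $a(n)=F_{j+1}-a(n-F_j)$, where $j\ge 2$ is the unique index with $F_j<n\le F_{j+1}$. *)

From Stdlib Require Import Arith List.

Fixpoint fib (n : nat) : nat :=
  match n with
  | 0 => 0
  | S m => match m with
           | 0 => 1
           | S k => fib m + fib k
           end
  end.

Fixpoint fib_index_from (fuel j n : nat) : nat :=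
  match fuel with
  | 0 => j
  | S f => if n <=? fib (S j) then j else fib_index_from f (S j) n
  end.

(* For n >= 2: the unique j >= 2 with fib j < n <= fib (j+1)
   (the least j >= 2 with n <= fib (j+1); fuel n suffices since fib (j+1) >= j). *)
Definition fib_index (n : nat) : nat := fib_index_from n 2 n.

Fixpoint a_fuel (fuel n : nat) : nat :=
  match fuel with
  | 0 => 0
  | S f =>
      match n with
      | 0 => 0
      | 1 => 1
      | _ => let j := fib_index n in fib (S j) - a_fuel f (n - fib j)
      end
  end.

(* OEIS A105774. Fuel n+1 suffices since n - F_j < n for n >= 2. *)
Definition a (n : nat) : nat := a_fuel (S n) n.

Example a_first_values :
  map a (seq 0 14) = 0 :: 1 :: 1 :: 2 :: 4 :: 4 :: 7 :: 7 :: 6 :: 12 :: 12 :: 11 :: 9 :: 9 :: nil.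
Proof. vm_compute. reflexivity. Qed.

(* For n in the Fibonacci block F_j < n <= F_{j+1} (j >= 2) we have
   a(n) = F_{j+1} - a(m) with m = n - F_j in [1, F_{j-1}], and by induction
   1 <= a(m) <= F_{j-1}; hence a(n) lies in [F_j, F_{j+1}). These value ranges are
   disjoint, so equal values at positions >= 2 come from the same block j, and
   subtracting F_j from three such positions yields three smaller positions with
   equal values. Positions 0, 1, 2 carry the values 0, 1, 1, while a(n) >= 2 for
   n >= 3, which settles the base cases. *)

From Stdlib Require Import Arith Lia.

Lemma fib_SS k : fib (S (S k)) = fib (S k) + fib k.
Proof. reflexivity. Qed.

Lemma fib_le_succ n : fib n <= fib (S n).
Proof. destruct n; [simpl; lia | rewrite fib_SS; lia]. Qed.

Lemma fib_le_mono m n : m <= n -> fib m <= fib n.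
Proof. induction 1; [lia | pose proof (fib_le_succ m0); lia]. Qed.

Lemma fib_pos n : 1 <= n -> 1 <= fib n.
Proof. intros H. pose proof (fib_le_mono 1 n H). simpl in *. lia. Qed.

Lemma fib_succ_ge n : n <= fib (S n).
Proof.
  induction n as [n IH] using lt_wf_ind.
  destruct n as [|[|k]]; try (simpl; lia).
  rewrite fib_SS. pose proof (IH (S k) ltac:(lia)). pose proof (fib_pos (S k) ltac:(lia)).
  lia.
Qed.

Lemma fib_succ_le_of_lt i j : i < j -> fib (S i) <= fib j.
Proof. apply fib_le_mono. Qed.

Lemma fib_block_unique i j n :
  fib i < n <= fib (S i) -> fib j < n <= fib (S j) -> i = j.
Proof.
  intros Hi Hj. destruct (Nat.lt_trichotomy i j) as [L|[L|L]]; auto.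
  - pose proof (fib_succ_le_of_lt i j L). lia.
  - pose proof (fib_succ_le_of_lt j i L). lia.
Qed.

Lemma fib_range_unique i j v :
  fib i <= v < fib (S i) -> fib j <= v < fib (S j) -> i = j.
Proof.
  intros Hi Hj. destruct (Nat.lt_trichotomy i j) as [L|[L|L]]; auto.
  - pose proof (fib_succ_le_of_lt i j L). lia.
  - pose proof (fib_succ_le_of_lt j i L). lia.
Qed.

Lemma fib_index_from_spec fuel j n :
  fib j < n -> n <= fib (S (j + fuel)) ->
  fib (fib_index_from fuel j n) < n <= fib (S (fib_index_from fuel j n))
  /\ j <= fib_index_from fuel j n.
Proof.
  revert j. induction fuel as [|fuel IH]; intros j H1 H2; cbn [fib_index_from].
  - rewrite Nat.add_0_r in H2. lia.
  - destruct (Nat.leb_spec n (fib (S j))) as [Hle|Hgt]; [lia|].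
    rewrite Nat.add_succ_r in H2. destruct (IH (S j) Hgt H2); lia.
Qed.

Lemma fib_index_spec n : 2 <= n ->
  fib (fib_index n) < n <= fib (S (fib_index n)) /\ 2 <= fib_index n.
Proof.
  intros H. apply fib_index_from_spec; [simpl; lia|].
  pose proof (fib_succ_ge (2 + n)). lia.
Qed.

Lemma a_fuel_irrelevant f g n : n < f -> n < g -> a_fuel f n = a_fuel g n.
Proof.
  revert g n. induction f as [|f IH]; intros g n Hf Hg; [lia|].
  destruct g as [|g]; [lia|].
  destruct n as [|[|n]]; cbn [a_fuel]; try reflexivity.
  destruct (fib_index_spec (S (S n)) ltac:(lia)).
  pose proof (fib_pos (fib_index (S (S n))) ltac:(lia)).
  f_equal. apply IH; lia.
Qed.

Lemma a_fuel_succ f n : 2 <= n ->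
  a_fuel (S f) n = fib (S (fib_index n)) - a_fuel f (n - fib (fib_index n)).
Proof. intros Hn. destruct n as [|[|n]]; [lia | lia | reflexivity]. Qed.

(* The recursion holds for every block index j, not only the one computed by
   fib_index, since the block of n is unique. *)
Lemma a_block n j : 2 <= j -> fib j < n <= fib (S j) ->
  a n = fib (S j) - a (n - fib j).
Proof.
  intros Hj Hn. pose proof (fib_pos j ltac:(lia)).
  assert (Hn2 : 2 <= n) by (pose proof (fib_le_mono 2 j Hj); simpl in *; lia).
  destruct (fib_index_spec n Hn2) as [Hblock _].
  assert (Hidx : fib_index n = j) by exact (fib_block_unique _ _ _ Hblock Hn).
  unfold a at 1. rewrite a_fuel_succ, Hidx by exact Hn2. f_equal. apply a_fuel_irrelevant; lia.
Qed.

Lemma a_block_bounds n j : 2 <= j -> fib j < n <= fib (S j) ->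
  fib j <= a n < fib (S j).
Proof.
  revert j. induction n as [n IH] using lt_wf_ind. intros j Hj Hn.
  rewrite (a_block n j Hj Hn).
  destruct j as [|[|j]]; try lia.
  pose proof (fib_pos (S j) ltac:(lia)). pose proof (fib_le_succ (S j)). pose proof (fib_SS (S j)).
  remember (n - fib (S (S j))) as m eqn:Em.
  assert (Hm : 1 <= m <= fib (S j)) by lia.
  assert (Ham : 1 <= a m <= fib (S j)).
  { destruct (Nat.eq_dec m 1) as [->|Hm1]; [split; [reflexivity | assumption]|].
    destruct (fib_index_spec m ltac:(lia)) as [Hi Hi2].
    assert (Hlt : fib_index m < S j).
    { destruct (Nat.lt_ge_cases (fib_index m) (S j)) as [L|L]; auto.
      pose proof (fib_le_mono _ _ L). lia. }
    pose proof (IH m ltac:(lia) _ Hi2 Hi).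
    pose proof (fib_succ_le_of_lt _ _ Hlt).
    pose proof (fib_pos (fib_index m) ltac:(lia)). lia. }
  lia.
Qed.

Lemma a_pos n : 1 <= n -> 1 <= a n.
Proof.
  intros Hn. destruct (Nat.eq_dec n 1) as [->|Hn1]; [reflexivity|].
  destruct (fib_index_spec n ltac:(lia)) as [Hb Hj].
  pose proof (a_block_bounds n _ Hj Hb). pose proof (fib_pos (fib_index n) ltac:(lia)).
  lia.
Qed.

Lemma a_ge_2 n : 3 <= n -> 2 <= a n.
Proof.
  intros Hn. destruct (fib_index_spec n ltac:(lia)) as [Hb Hj].
  assert (Hj3 : 3 <= fib_index n)
    by (destruct (Nat.eq_dec (fib_index n) 2) as [E|]; [rewrite E in Hb; simpl in Hb|]; lia).
  pose proof (a_block_bounds n _ Hj Hb). pose proof (fib_le_mono 3 _ Hj3). simpl in *.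
  lia.
Qed.

Lemma a_eq_fib_index x y : 2 <= x -> 2 <= y -> a x = a y -> fib_index x = fib_index y.
Proof.
  intros Hx Hy Exy.
  destruct (fib_index_spec x Hx) as [Bx Jx], (fib_index_spec y Hy) as [By Jy].
  pose proof (a_block_bounds x _ Jx Bx). pose proof (a_block_bounds y _ Jy By).
  apply fib_range_unique with (a y); lia.
Qed.

Lemma a_eq_shift x y : 2 <= x -> 2 <= y -> a x = a y ->
  0 < fib (fib_index x) < x /\ fib (fib_index x) < y
  /\ a (x - fib (fib_index x)) = a (y - fib (fib_index x)).
Proof.
  intros Hx Hy Exy.
  destruct (fib_index_spec x Hx) as [Bx Jx], (fib_index_spec y Hy) as [By _].
  rewrite <- (a_eq_fib_index x y Hx Hy Exy) in By.
  pose proof (a_block_bounds x _ Jx Bx).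
  pose proof (a_block x _ Jx Bx). pose proof (a_block y _ Jx By).
  pose proof (fib_pos (fib_index x) ltac:(lia)).
  lia.
Qed.

Theorem proposition1 :
  ~ (exists x y z : nat, x < y /\ y < z /\ a x = a y /\ a y = a z).
Proof.
  intros [x [y [z H]]]. revert x y H.
  induction z as [z IH] using lt_wf_ind. intros x y [Hxy [Hyz [Exy Eyz]]].
  pose proof (a_pos y ltac:(lia)).
  destruct (Nat.lt_ge_cases x 2) as [Hx|Hx].
  - destruct x as [|[|]]; [| pose proof (a_ge_2 z ltac:(lia)) | lia].
    + change (a 0) with 0 in Exy. lia.
    + change (a 1) with 1 in Exy. lia.
  - pose proof (a_eq_fib_index x y Hx ltac:(lia) Exy) as Ej.
    destruct (a_eq_shift x y Hx ltac:(lia) Exy) as [Fx [Fy Sxy]].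
    destruct (a_eq_shift y z ltac:(lia) ltac:(lia) Eyz) as [_ [Fz Syz]].
    rewrite <- Ej in Fz, Syz.
    apply (IH (z - fib (fib_index x)) ltac:(lia) (x - fib (fib_index x)) (y - fib (fib_index x))).
    repeat split; lia.
Qed.
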